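(* Let $\mathbb{K}\in\{\mathbb{R},\mathbb{C}\}$, $\star\in\{*,T\}$, $\epsilon_1,\epsilon_2\in\{1,-1\}$, and let $Q(\lambda)=\lambda^2M+\lambda D+K\in\mathbb{K}^{n\times n}[\lambda]$ satisfy $M^\star=\epsilon_1M$, $D^\star=\epsilon_2D$, $K^\star=\epsilon_1K$. Let $(\lambda_0,x_0)$ be an eigenpair of $Q(\lambda)$ with $\lambda_0\neq\epsilon_1\epsilon_2\lambda_0^\star$, and let $\tilde x_0$ be an eigenvector of $Q(\lambda)$ for the eigenvalue $\epsilon_1\epsilon_2\lambda_0^\star$. Let $X_0=[x_0\ \tilde x_0]$, $\Lambda_0=\mathrm{diag}(\lambda_0,\epsilon_1\epsilon_2\lambda_0^\star)$, and $s_0:=2\epsilon_1\epsilon_2\lambda_0^\star x_0^\star M\tilde x_0+x_0^\star D\tilde x_0$. Then $(X_0,\Lambda_0)$ is an invariant pair of $Q(\lambda)$ and $X_0^\star MX_0\Lambda_0+\epsilon_1\epsilon_2\Lambda_0^\star X_0^\star MX_0+X_0^\star DX_0=\begin{bmatrix}0&s_0\\\epsilon_2s_0^\star&0\end{bmatrix}$.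
   Context: For a matrix or vector $A$, $A^\star$ is $A^*$ (conjugate transpose) if $\star=*$ and $A^T$ if $\star=T$; for $\lambda\in\mathbb{C}$, $\lambda^\star=\overline{\lambda}$ if $\star=*$ and $\lambda^\star=\lambda$ if $\star=T$. An eigenpair $(\lambda_0,x_0)$ means $x_0\neq0$ and $(\lambda_0^2M+\lambda_0D+K)x_0=0$. A pair $(X,\Lambda)$ is an invariant pair of $Q(\lambda)$ if $MX\Lambda^2+DX\Lambda+KX=0$. *)

From HB Require Import structures.
From mathcomp Require Import all_boot all_order all_algebra.
From mathcomp Require Import reals.
From mathcomp Require Import complex.
Set Implicit Arguments. Unset Strict Implicit. Unset Printing Implicit Defensive.
Import Order.TTheory GRing.Theory Num.Theory.
Local Open Scope ring_scope.

(* K^star for a matrix, where [sc] is the scalar map lambda |-> lambda^star: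
   sc = conjugation for star = *, sc = id for star = T. *)
Definition mstar (F : fieldType) (sc : F -> F) (m n : nat) (A : 'M[F]_(m, n))
  : 'M[F]_(n, m) := (map_mx sc A)^T.

Definition is_eigpair (F : fieldType) (n : nat) (M D K : 'M[F]_n)
  (l : F) (x : 'cV[F]_n) : Prop :=
  x != 0 /\ (l ^+ 2 *: M + l *: D + K) *m x = 0.

Definition invariant_pair (F : fieldType) (n k : nat) (M D K : 'M[F]_n)
  (X : 'M[F]_(n, k)) (L : 'M[F]_k) : Prop :=
  M *m X *m (L *m L) + D *m X *m L + K *m X = 0.

Definition mx2 (F : fieldType) (a b c d : F) : 'M[F]_2 :=
  \matrix_(i < 2, j < 2)
    if (i == 0%N :> nat) then (if (j == 0%N :> nat) then a else b)
    else (if (j == 0%N :> nat) then c else d).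

Definition cor26 (F : fieldType) (sc : F -> F) : Prop :=
  forall (n : nat) (e1 e2 : F) (M D K : 'M[F]_n) (l0 : F) (x0 xt : 'cV[F]_n),
    (e1 = 1 \/ e1 = -1) -> (e2 = 1 \/ e2 = -1) ->
    mstar sc M = e1 *: M -> mstar sc D = e2 *: D -> mstar sc K = e1 *: K ->
    is_eigpair M D K l0 x0 ->
    l0 != e1 * e2 * sc l0 ->
    is_eigpair M D K (e1 * e2 * sc l0) xt ->
    let X0 : 'M[F]_(n, 2) := row_mx x0 xt in
    let L0 : 'M[F]_2 := mx2 l0 0 0 (e1 * e2 * sc l0) in
    let s0 : F := 2%:R * e1 * e2 * sc l0 * (mstar sc x0 *m M *m xt) 0 0
                  + (mstar sc x0 *m D *m xt) 0 0 in
    invariant_pair M D K X0 L0 /\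
    mstar sc X0 *m M *m X0 *m L0 + (e1 * e2) *: (mstar sc L0 *m mstar sc X0 *m M *m X0)
      + mstar sc X0 *m D *m X0
    = mx2 0 s0 (e2 * sc s0) 0.

(* Write [eps = e1 e2].  Multiply [Q(l) x = 0] by [x^star] and apply the involution
   [sc] to the resulting scalar equation; by the symmetries of [M], [D], [K] the
   difference of the two equations is
   [(l - eps l^star) ((l + eps l^star) x^star M x + x^star D x) = 0], so the second
   factor vanishes when [l <> eps l^star].  For [X] with columns [x_j] and
   [L = diag(d_j)], the [(i, j)] entry of [X^star M X L + eps L^star X^star M X + X^star D X]
   is [(d_j + eps d_i^star) x_i^star M x_j + x_i^star D x_j]: the diagonal entries
   vanish by the above, the [(0, 1)] entry is [s0] by definition and the [(1, 0)]
   entry is [e2 s0^star] by applying [sc].  The three settings of the theorem are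
   instances of an arbitrary involutive field automorphism [sc]. *)

From HB Require Import structures.
From mathcomp Require Import all_boot all_order all_algebra.
From mathcomp Require Import reals complex ring.
Set Implicit Arguments. Unset Strict Implicit. Unset Printing Implicit Defensive.
Import GRing.Theory Num.Theory.
Local Open Scope ring_scope.

Lemma col_mulmx (F : fieldType) m n p j (A : 'M[F]_(m, n)) (B : 'M[F]_(n, p)) :
  col j (A *m B) = A *m col j B.
Proof. by rewrite !colE mulmxA. Qed.

Lemma mx2_diag (F : fieldType) (a b : F) :
  mx2 a 0 0 b = diag_mx (\row_(j < 2) [:: a; b]`_j).
Proof. by apply/matrixP => -[[|[|i]] Hi] -[[|[|j]] Hj] //; rewrite !mxE. Qed.

Lemma invariant_pair_diag (F : fieldType) n k (M D K : 'M[F]_n)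
    (X : 'M[F]_(n, k)) (d : 'rV[F]_k) :
  (forall j, (d 0 j ^+ 2 *: M + d 0 j *: D + K) *m col j X = 0) ->
  invariant_pair M D K X (diag_mx d).
Proof.
move=> Qcol; apply/matrixP => i j.
transitivity (((d 0 j ^+ 2 *: M + d 0 j *: D + K) *m col j X) i 0).
  rewrite !mulmxDl -!scalemxAl -!col_mulmx mulmxA !mul_mx_diag !mxE.
  by rewrite expr2; ring.
by rewrite Qcol !mxE.
Qed.

Section StructuredQuadratic.
Variables (F : fieldType) (sc : {rmorphism F -> F}).
Hypothesis scK : involutive sc.

Local Notation star := (mstar sc).
Definition sform n (u : 'cV[F]_n) (A : 'M[F]_n) (v : 'cV[F]_n) : F :=
  (star u *m A *m v) 0 0.

Lemma mstarM m n p (A : 'M[F]_(m, n)) (B : 'M[F]_(n, p)) : star (A *m B) = star B *m star A.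
Proof. by rewrite /mstar map_mxM trmx_mul. Qed.

Lemma mstarK m n (A : 'M[F]_(m, n)) : star (star A) = A.
Proof. by apply/matrixP => i j; rewrite !mxE scK. Qed.

Lemma mstar_diag_mx n (d : 'rV[F]_n) : star (diag_mx d) = diag_mx (map_mx sc d).
Proof. by rewrite /mstar map_diag_mx tr_diag_mx. Qed.

Lemma rmorph_sign (e : F) : e = 1 \/ e = -1 -> sc e = e.
Proof. by case=> ->; rewrite ?rmorph1 ?rmorphN1. Qed.

Lemma sign_scK e1 e2 l : e1 = 1 \/ e1 = -1 -> e2 = 1 \/ e2 = -1 ->
  e1 * e2 * sc (e1 * e2 * sc l) = l.
Proof.
move=> e1_sign e2_sign; rewrite !rmorphM scK !rmorph_sign //.
by case: e1_sign => ->; case: e2_sign => ->; ring.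
Qed.

Lemma sformJ n (u v : 'cV[F]_n) (A : 'M[F]_n) : sc (sform u A v) = sform v (star A) u.
Proof.
rewrite /sform; have -> : sc ((star u *m A *m v) 0 0) = (star (star u *m A *m v)) 0 0.
  by rewrite !mxE.
by rewrite !mstarM mstarK mulmxA.
Qed.

Lemma sformZ n (u v : 'cV[F]_n) (A : 'M[F]_n) c : sform u (c *: A) v = c * sform u A v.
Proof. by rewrite /sform -scalemxAr -scalemxAl mxE. Qed.

Lemma gram_mxE n k (X : 'M[F]_(n, k)) (A : 'M[F]_n) i j :
  (star X *m A *m X) i j = sform (col i X) A (col j X).
Proof.
rewrite /sform; have -> : star (col i X) = row i (star X).
  by rewrite /mstar map_col tr_col.
by rewrite -!row_mul -col_mulmx !mxE.
Qed.

Section StructuredPencil.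
Variables (n : nat) (e1 e2 : F) (M D K : 'M[F]_n).

Lemma gram_diag_mxE k (X : 'M[F]_(n, k)) (d : 'rV[F]_k) i j :
  (star X *m M *m X *m diag_mx d + (e1 * e2) *: (star (diag_mx d) *m star X *m M *m X)
     + star X *m D *m X) i j
  = (d 0 j + e1 * e2 * sc (d 0 i)) * sform (col i X) M (col j X)
    + sform (col i X) D (col j X).
Proof.
have -> : star (diag_mx d) *m star X *m M *m X = star (diag_mx d) *m (star X *m M *m X).
  by rewrite !mulmxA.
rewrite mstar_diag_mx mul_diag_mx mul_mx_diag -!gram_mxE.
by move: (star X *m M *m X) (star X *m D *m X) => GM GD; rewrite !mxE; ring.
Qed.

Hypotheses (e1_sign : e1 = 1 \/ e1 = -1) (e2_sign : e2 = 1 \/ e2 = -1).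
Hypotheses (M_sym : star M = e1 *: M) (D_sym : star D = e2 *: D) (K_sym : star K = e1 *: K).

Lemma eigvec_sform l (x : 'cV[F]_n) :
  (l ^+ 2 *: M + l *: D + K) *m x = 0 -> l != e1 * e2 * sc l ->
  (l + e1 * e2 * sc l) * sform x M x + sform x D x = 0.
Proof.
move=> Qx l_neq.
have Qform : l ^+ 2 * sform x M x + l * sform x D x + sform x K x = 0.
  transitivity ((star x *m ((l ^+ 2 *: M + l *: D + K) *m x)) 0 0).
    by rewrite /sform mulmxA !mulmxDr !mulmxDl -!scalemxAr -!scalemxAl !mxE.
  by rewrite Qx mulmx0 mxE.
have Qform_sc := congr1 sc Qform.
rewrite rmorph0 !rmorphD !rmorphM !sformJ M_sym D_sym K_sym !sformZ in Qform_sc.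
set a := sform x M x in Qform Qform_sc *; set g := sform x D x in Qform Qform_sc *.
set c := sform x K x in Qform Qform_sc; set s := sc l in Qform_sc l_neq *.
have : (l - e1 * e2 * s) * ((l + e1 * e2 * s) * a + g) =
       (l ^+ 2 * a + l * g + c) - e1 * (s * s * (e1 * a) + s * (e2 * g) + e1 * c).
  by case: e1_sign => ->; case: e2_sign => ->; ring.
rewrite Qform Qform_sc mulr0 subrr => /eqP.
by rewrite mulf_eq0 subr_eq0 (negbTE l_neq) => /eqP.
Qed.

End StructuredPencil.

Lemma cor26_structured : cor26 sc.
Proof.
move=> n e1 e2 M D K l0 x0 xt e1_sign e2_sign M_sym D_sym K_sym.
move=> [_ Qx0] l0_neq [_ Qxt] X0 L0 s0.
have s0E : s0 = 2%:R * e1 * e2 * sc l0 * sform x0 M xt + sform x0 D xt by [].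
have l0_back := sign_scK l0 e1_sign e2_sign.
have form_x0 := eigvec_sform e1_sign e2_sign M_sym D_sym K_sym Qx0 l0_neq.
have := eigvec_sform e1_sign e2_sign M_sym D_sym K_sym Qxt.
rewrite l0_back eq_sym => /(_ l0_neq) form_xt.
rewrite /L0 mx2_diag; split.
  apply: invariant_pair_diag => j.
  by case: (@split_ordP 1 1 j) => k ->;
    rewrite (ord1 k) /X0 ?(colKl (n1:=1)) ?(colKr (n1:=1)) col_id !mxE.
apply/matrixP => i j; rewrite gram_diag_mxE.
case: (@split_ordP 1 1 i) => i1 ->; case: (@split_ordP 1 1 j) => j1 ->.
all: rewrite (ord1 i1) (ord1 j1) /X0 ?(colKl (n1:=1)) ?(colKr (n1:=1)) !col_id !mxE /=.
- exact: form_x0.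
- by rewrite s0E; ring.
- rewrite l0_back s0E rmorphD !rmorphM rmorph_nat scK !sformJ M_sym D_sym !sformZ.
  rewrite (rmorph_sign e1_sign) (rmorph_sign e2_sign).
  by case: e1_sign => ->; case: e2_sign => ->; ring.
- by rewrite l0_back.
Qed.

End StructuredQuadratic.

Theorem corollary2p6 (R : realType) :
  cor26 (fun x : R => x) /\
  cor26 (fun x : R[i] => conjc x) /\
  cor26 (fun x : R[i] => x).
Proof.
split; [|split].
- exact: (@cor26_structured R idfun (fun _ => erefl)).
- exact: (@cor26_structured R[i] conjc (@conjcK R)).
- exact: (@cor26_structured R[i] idfun (fun _ => erefl)).
Qed.
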